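(* Let $S$ be a $\Gamma$-hemiring and let $\mu$ be a fuzzy h-ideal of $S$. Then for every $x\in S$, $\langle x,\mu^{+}\rangle$ is a fuzzy h-ideal of $S$, where $\mu^{+}(y)=\mu(y)-\mu(0)+1$ for $y\in S$.
   Context: A $\Gamma$-hemiring is a pair of additive commutative semigroups with zero $S$ and $\Gamma$ with a map $S\times\Gamma\times S\to S$, $(a,\alpha,b)\mapsto a\alpha b$, such that for all $a,b,c\in S$, $\alpha,\beta\in\Gamma$: $(a+b)\alpha c=a\alpha c+b\alpha c$; $a\alpha(b+c)=a\alpha b+a\alpha c$; $a(\alpha+\beta)b=a\alpha b+a\beta b$; $a\alpha(b\beta c)=(a\alpha b)\beta c$; $0\alpha a=0=a\alpha0$; $a0b=0=b0a$. A fuzzy h-ideal of $S$ is a map $\mu:S\to[0,1]$, not identically $0$, such that for all $x,y,a,b,z\in S$, $\gamma\in\Gamma$: $\mu(x+y)\ge\min\{\mu(x),\mu(y)\}$; $\mu(x\gamma y)\ge\mu(x)$ and $\mu(x\gamma y)\ge\mu(y)$; $x+a+z=b+z$ implies $\mu(x)\ge\min\{\mu(a),\mu(b)\}$. The extension of a fuzzy subset $\mu$ by $x$ is $\langle x,\mu\rangle(y)=\inf_{s\in S,\ \alpha,\gamma\in\Gamma}\mu(x\alpha s\gamma y)$. *)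

From HB Require Import structures.
From mathcomp Require Import all_boot all_order all_algebra.
From mathcomp Require Import all_classical all_reals.
Set Implicit Arguments. Unset Strict Implicit. Unset Printing Implicit Defensive.
Import Order.TTheory GRing.Theory Num.Theory.
Local Open Scope classical_set_scope.
Local Open Scope ring_scope.

Record GammaHemiring := {
  carrier :> Type;
  gam : Type;
  sadd : carrier -> carrier -> carrier;
  szero : carrier;
  gadd : gam -> gam -> gam;
  gzero : gam;
  tmul : carrier -> gam -> carrier -> carrier;
  saddA : forall a b c, sadd a (sadd b c) = sadd (sadd a b) c;
  saddC : forall a b, sadd a b = sadd b a;
  sadd0 : forall a, sadd szero a = a;
  gaddA : forall a b c, gadd a (gadd b c) = gadd (gadd a b) c;
  gaddC : forall a b, gadd a b = gadd b a;
  gadd0 : forall a, gadd gzero a = a;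
  tmulDl : forall a b c al, tmul (sadd a b) al c = sadd (tmul a al c) (tmul b al c);
  tmulDr : forall a b c al, tmul a al (sadd b c) = sadd (tmul a al b) (tmul a al c);
  tmulDm : forall a b al be, tmul a (gadd al be) b = sadd (tmul a al b) (tmul a be b);
  tmulA : forall a b c al be, tmul a al (tmul b be c) = tmul (tmul a al b) be c;
  tmul0l : forall a al, tmul szero al a = szero;
  tmul0r : forall a al, tmul a al szero = szero;
  tmul0m : forall a b, tmul a gzero b = szero /\ tmul b gzero a = szero
}.

Definition fuzzy_h_ideal (R : realType) (S : GammaHemiring) (mu : S -> R) : Prop :=
  (forall x, 0 <= mu x <= 1) /\
  (exists x, mu x != 0) /\
  (forall x y, mu (sadd x y) >= Order.min (mu x) (mu y)) /\
  (forall x y (g : gam S), mu (tmul x g y) >= mu x /\ mu (tmul x g y) >= mu y) /\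
  (forall x a b z, sadd (sadd x a) z = sadd b z -> mu x >= Order.min (mu a) (mu b)).

Definition fuzzy_plus (R : realType) (S : GammaHemiring) (mu : S -> R) : S -> R :=
  fun y => mu y - mu (szero S) + 1.

(* extension <x, mu>(y) = inf_{s, alpha, gamma} mu (x alpha s gamma y) *)
Definition fuzzy_ext (R : realType) (S : GammaHemiring) (x : S) (mu : S -> R) : S -> R :=
  fun y => inf [set r | exists (s : S) (al ga : gam S), r = mu (tmul (tmul x al s) ga y)].

From mathcomp Require Import all_boot all_order all_algebra.
From mathcomp Require Import all_classical all_reals.
From mathcomp Require Import lra.
Set Implicit Arguments. Unset Strict Implicit. Unset Printing Implicit Defensive.
Import Order.TTheory GRing.Theory Num.Theory.
Local Open Scope classical_set_scope.
Local Open Scope ring_scope.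

(* mu attains its maximum at 0 (as 0 = 0 ga y), so mu^+ is a translate of mu
   with values in [0,1]; translation preserves every defining min-inequality.
   For a fuzzy h-ideal nu, each inequality required of <x,nu> at y already holds
   for nu at the points x al s ga y, since y |-> x al s ga y is additive and
   associative, and it passes to the infimum over s, al, ga.  Nontriviality
   comes from <x,nu>(0) = nu(0) > 0. *)

Section FuzzyIdeal.

Variables (R : realType) (S : GammaHemiring).
Implicit Types (mu nu : S -> R) (x y z a b s : S).

Lemma fuzzy_h_ideal_le0 mu : fuzzy_h_ideal mu -> forall y, mu y <= mu (szero S).
Proof.
move=> [_ [_ [_ [mu_mul _]]]] y.
by have [_] := mu_mul (szero S) y (gzero S); rewrite tmul0l.
Qed.

Lemma fuzzy_h_ideal_gt0 mu : fuzzy_h_ideal mu -> 0 < mu (szero S).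
Proof.
move=> mu_ideal; have [mu01 [[y mu_y_neq0] _]] := mu_ideal.
apply: lt_le_trans (fuzzy_h_ideal_le0 mu_ideal y).
by have /andP[mu_y_ge0 _] := mu01 y; rewrite lt_neqAle eq_sym mu_y_neq0.
Qed.

Lemma fuzzy_plus0 mu : fuzzy_plus mu (szero S) = 1.
Proof. by rewrite /fuzzy_plus subrr add0r. Qed.

Lemma ler_fuzzy_plus mu a b : (fuzzy_plus mu a <= fuzzy_plus mu b) = (mu a <= mu b).
Proof. by rewrite /fuzzy_plus !lerD2r. Qed.

Lemma ge_min_fuzzy_plus mu u a b :
  (Order.min (fuzzy_plus mu a) (fuzzy_plus mu b) <= fuzzy_plus mu u) =
  (Order.min (mu a) (mu b) <= mu u).
Proof. by rewrite !ge_min !ler_fuzzy_plus. Qed.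

Lemma fuzzy_plus_h_ideal mu : fuzzy_h_ideal mu -> fuzzy_h_ideal (fuzzy_plus mu).
Proof.
move=> mu_ideal; have [mu01 [_ [mu_add [mu_mul mu_h]]]] := mu_ideal.
split.
  move=> y; have /andP[mu_y_ge0 _] := mu01 y.
  have /andP[_ mu0_le1] := mu01 (szero S).
  have := fuzzy_h_ideal_le0 mu_ideal y.
  by rewrite /fuzzy_plus => ?; apply/andP; split; lra.
split; first by exists (szero S); rewrite fuzzy_plus0 oner_neq0.
split; first by move=> y z; rewrite ge_min_fuzzy_plus; apply: mu_add.
split; first by move=> y z g; rewrite !ler_fuzzy_plus; apply: mu_mul.
by move=> y a b z E; rewrite ge_min_fuzzy_plus; apply: mu_h E.
Qed.

Section Extension.

Variables (nu : S -> R) (x : S).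

Lemma fuzzy_ext_glb y c :
  (forall s al ga, c <= nu (tmul (tmul x al s) ga y)) -> c <= fuzzy_ext x nu y.
Proof.
move=> c_lb; apply: lb_le_inf; last by move=> r [s [al [ga ->]]].
by exists (nu (tmul (tmul x (gzero S) (szero S)) (gzero S) y));
   exists (szero S), (gzero S), (gzero S).
Qed.

Hypothesis nu_ge0 : forall y, 0 <= nu y.

Lemma fuzzy_ext_le y s al ga : fuzzy_ext x nu y <= nu (tmul (tmul x al s) ga y).
Proof.
apply: ge_inf; last by exists s, al, ga.
by exists 0 => r [s' [al' [ga' ->]]].
Qed.

Lemma fuzzy_ext_ge_min u a b :
  (forall s al ga, Order.min (nu (tmul (tmul x al s) ga a))
                             (nu (tmul (tmul x al s) ga b))
                   <= nu (tmul (tmul x al s) ga u)) ->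
  Order.min (fuzzy_ext x nu a) (fuzzy_ext x nu b) <= fuzzy_ext x nu u.
Proof.
move=> nu_min; apply: fuzzy_ext_glb => s al ga; apply: le_trans (nu_min s al ga).
by rewrite le_min !ge_min !fuzzy_ext_le ?orbT.
Qed.

End Extension.

Lemma fuzzy_ext0 nu x : fuzzy_ext x nu (szero S) = nu (szero S).
Proof.
rewrite /fuzzy_ext; suff -> : [set r | exists s al ga,
    r = nu (tmul (tmul x al s) ga (szero S))] = [set nu (szero S)] by exact: inf1.
apply/seteqP; split => r /=; first by move=> [s [al [ga ->]]]; rewrite tmul0r.
by move=> ->; exists (szero S), (gzero S), (gzero S); rewrite tmul0r.
Qed.

Lemma fuzzy_ext_h_ideal nu x : fuzzy_h_ideal nu -> fuzzy_h_ideal (fuzzy_ext x nu).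
Proof.
move=> nu_ideal; have [nu01 [_ [nu_add [nu_mul nu_h]]]] := nu_ideal.
have nu_ge0 y : 0 <= nu y by have /andP[] := nu01 y.
split.
  move=> y; apply/andP; split; first by apply: fuzzy_ext_glb.
  apply: le_trans (fuzzy_ext_le x nu_ge0 y (szero S) (gzero S) (gzero S)) _.
  by have /andP[] := nu01 (tmul (tmul x (gzero S) (szero S)) (gzero S) y).
split.
  by exists (szero S); rewrite fuzzy_ext0 gt_eqF // fuzzy_h_ideal_gt0.
split.
  move=> y z; apply: fuzzy_ext_ge_min => // s al ga.
  by rewrite tmulDr; apply: nu_add.
split.
  move=> y z g; split; apply: fuzzy_ext_glb => s al ga.
    rewrite tmulA; apply: le_trans (fuzzy_ext_le x nu_ge0 y s al ga) _.
    by have [] := nu_mul (tmul (tmul x al s) ga y) z g.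
  rewrite [tmul _ ga _]tmulA -[tmul (tmul x al s) ga y]tmulA.
  exact: fuzzy_ext_le.
move=> y a b z E; apply: fuzzy_ext_ge_min => // s al ga.
apply: (nu_h _ _ _ (tmul (tmul x al s) ga z)).
by have := congr1 (tmul (tmul x al s) ga) E; rewrite !tmulDr => ->.
Qed.

End FuzzyIdeal.

Theorem proposition3p12 (R : realType) (S : GammaHemiring) (mu : S -> R) :
  fuzzy_h_ideal mu ->
  forall x : S, fuzzy_h_ideal (fuzzy_ext x (fuzzy_plus mu)).
Proof.
by move=> mu_ideal x; apply/fuzzy_ext_h_ideal/fuzzy_plus_h_ideal.
Qed.
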